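(* Let $\mathcal{K}$ be a continuous unitary representation of $\overline{\mathfrak{S}}_\infty$ in a Hilbert space $\mathcal{H}$, and let $n\geq 0$ be an integer. Then the sequence of operators $\{\mathcal{K}({}^n\sigma_m)\}_{m\in\mathbb{N}}$ converges in the weak operator topology to a self-adjoint operator $P_n$.
   Context: $\overline{\mathfrak{S}}_\infty$ is the group of all bijections of $\mathbb{N}=\{1,2,\dots\}$, with the Polish group topology in which the subgroups $\mathfrak{S}(n,\infty)=\{s\in\overline{\mathfrak{S}}_\infty: s(k)=k \text{ for } k=1,\dots,n\}$ form a fundamental system of neighborhoods of the identity; continuity of $\mathcal{K}$ means continuity into the unitary group with the strong operator topology, i.e. for each $\eta\in\mathcal{H}$, $\lim_{k\to\infty}\sup_{s\in\mathfrak{S}(k,\infty)}\|\mathcal{K}(s)\eta-\eta\|=0$. For $k\ne j$, $(k\;j)$ denotes the transposition interchanging $k$ and $j$. Define ${}^n\sigma_m=(n+1\;\;n+m+1)(n+2\;\;n+m+2)\cdots(n+m\;\;n+2m)$. *)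

From mathcomp Require Import all_boot all_order all_algebra.
From mathcomp Require Import reals.
From mathcomp.real_closed Require Import complex.
Set Implicit Arguments. Unset Strict Implicit. Unset Printing Implicit Defensive.
Import Order.TTheory GRing.Theory Num.Theory.
Local Open Scope ring_scope.

(* The group of all bijections of N = {1,2,...}: we model a bijection of
   {1,2,...} as a bijection s of nat with s 0 = 0 (0 is a dummy point);
   points k >= 1 are the genuine elements of N. *)
Definition is_perm_inf (s : nat -> nat) : Prop := bijective s /\ s 0%N = 0%N.

Definition fixes_upto (n : nat) (s : nat -> nat) : Prop :=
  forall k : nat, (1 <= k <= n)%N -> s k = k.

Definition transp (k j : nat) (x : nat) : nat :=
  if x == k then j else if x == j then k else x.

(* ^n sigma_m = (n+1 n+m+1)(n+2 n+m+2)...(n+m n+2m) *)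
Definition sigma (n m : nat) (x : nat) : nat :=
  if (n + 1 <= x <= n + m)%N then (x + m)%N
  else if (n + m + 1 <= x <= n + 2 * m)%N then (x - m)%N
  else x.

Section Hilbert.
Variables (R : realType) (H : lmodType R[i]) (ip : H -> H -> R[i]).

Definition hnorm (x : H) : R := Num.sqrt (complex.Re (ip x x)).

Definition is_hilbert : Prop :=
  [/\ (forall (a : R[i]) (x y z : H), ip (a *: x + y) z = a * ip x z + ip y z),
      (forall x y : H, ip y x = conjc (ip x y)),
      (forall x : H, 0 <= complex.Re (ip x x) /\ complex.Im (ip x x) = 0),
      (forall x : H, ip x x = 0 -> x = 0) &
      (forall u : nat -> H,
         (forall e : R, 0 < e -> exists N : nat, forall p q : nat,
              (N <= p)%N -> (N <= q)%N -> hnorm (u p - u q) < e) ->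
         exists l : H, forall e : R, 0 < e -> exists N : nat, forall p : nat,
              (N <= p)%N -> hnorm (u p - l) < e)].

Definition lin_op (T : H -> H) : Prop :=
  forall (a : R[i]) (x y : H), T (a *: x + y) = a *: T x + T y.

Definition bounded_op (T : H -> H) : Prop :=
  exists c : R, forall x : H, hnorm (T x) <= c * hnorm x.

Definition unitary (U : H -> H) : Prop :=
  [/\ lin_op U, (forall x y : H, ip (U x) (U y) = ip x y) &
      (forall y : H, exists x : H, U x = y)].

Definition self_adjoint (T : H -> H) : Prop :=
  lin_op T /\ bounded_op T /\ (forall x y : H, ip (T x) y = ip x (T y)).

Definition unitary_rep (K : (nat -> nat) -> H -> H) : Prop :=
  [/\ (forall s, is_perm_inf s -> unitary (K s)),
      (forall x : H, K id x = x) &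
      (forall s t, is_perm_inf s -> is_perm_inf t ->
         forall x : H, K (s \o t) x = K s (K t x))].

Definition rep_continuous (K : (nat -> nat) -> H -> H) : Prop :=
  forall (eta : H) (e : R), 0 < e -> exists k : nat, forall s,
    is_perm_inf s -> fixes_upto k s -> hnorm (K s eta - eta) <= e.

Definition ccvg (z : nat -> R[i]) (l : R[i]) : Prop :=
  forall e : R, 0 < e -> exists N : nat, forall m : nat,
    (N <= m)%N -> ComplexField.Normc.normc (z m - l) < e.

Definition wot_cvg (A : nat -> H -> H) (T : H -> H) : Prop :=
  forall xi eta : H, ccvg (fun m => ip (A m xi) eta) (ip (T xi) eta).

End Hilbert.

(* The real parts of the matrix coefficients m |-> <K(^n sigma_m) xi, eta> form a
   Cauchy sequence.  For k <= m and m + k <= M one has sigma_M = b o sigma_m o t,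
   where the block swap b only moves points beyond n + m and t only moves points
   beyond n + k.  By continuity K(t) xi and K(b) eta are close to xi and eta once k
   is large, and b is an involution, so <K(sigma_M) xi, eta> =
   <K(sigma_m) K(t) xi, K(b) eta> is close to <K(sigma_m) xi, eta>.  The limit is a
   bounded form, represented by an operator P through the Riesz representation
   theorem (proved here for real-linear functionals: a maximizing sequence in the
   unit ball is Cauchy by the parallelogram law).  P is self-adjoint because every
   sigma_m is an involution and K is unitary. *)

From mathcomp Require Import all_boot all_order all_algebra.
From mathcomp Require Import reals.
From mathcomp.real_closed Require Import complex.
From mathcomp Require Import zify ring lra.
From mathcomp Require Import boolp classical_sets.
Set Implicit Arguments. Unset Strict Implicit. Unset Printing Implicit Defensive.
Import Order.TTheory GRing.Theory Num.Theory.
Local Open Scope ring_scope.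
Local Open Scope complex_scope.

Section ComplexParts.
Variable R : rcfType.
Local Notation Re := complex.Re.
Local Notation Im := complex.Im.
Implicit Types a b : R[i].

Lemma ReD a b : Re (a + b) = Re a + Re b. Proof. by case: a => ? ?; case: b => ? ?. Qed.
Lemma ImD a b : Im (a + b) = Im a + Im b. Proof. by case: a => ? ?; case: b => ? ?. Qed.
Lemma ReN a : Re (- a) = - Re a. Proof. by case: a. Qed.
Lemma ImN a : Im (- a) = - Im a. Proof. by case: a. Qed.
Lemma ReM a b : Re (a * b) = Re a * Re b - Im a * Im b.
Proof. by case: a => ? ?; case: b => ? ?. Qed.
Lemma ReJ a : Re a^* = Re a. Proof. by case: a. Qed.

Lemma complexP a b : Re a = Re b -> Im a = Im b -> a = b.
Proof. by case: a => ? ?; case: b => ? ? /= -> ->. Qed.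

Lemma Re_conjiM a : Re ('i^* * a) = Im a.
Proof. by case: a => ? ? /=; lra. Qed.

Lemma normc_le_ReIm a : ComplexField.Normc.normc a <= `|Re a| + `|Im a|.
Proof.
case: a => x y /=; rewrite /ComplexField.Normc.normc.
have xy_ge0 : 0 <= `|x| + `|y| by rewrite addr_ge0.
rewrite -[leRHS](ger0_norm xy_ge0) -(sqrtr_sqr (`|x| + `|y|)) ler_sqrt ?sqr_ge0 //.
have := mulr_ge0 (normr_ge0 x) (normr_ge0 y).
by rewrite sqrrD !real_normK ?num_real //; lra.
Qed.
End ComplexParts.

Section InnerProduct.
Variables (R : realType) (H : lmodType R[i]) (ip : H -> H -> R[i]).
Hypothesis hH : is_hilbert ip.
Local Notation Re := complex.Re.
Local Notation Im := complex.Im.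
Local Notation hn := (hnorm ip).
Implicit Types (a : R[i]) (r : R) (x y z : H).

Definition sqnorm x : R := Re (ip x x).

Lemma ipDZl a x y z : ip (a *: x + y) z = a * ip x z + ip y z.
Proof. by case: hH. Qed.

Lemma ipC x y : ip y x = (ip x y)^*.
Proof. by case: hH. Qed.

Lemma ipDl x y z : ip (x + y) z = ip x z + ip y z.
Proof. by have := ipDZl 1 x y z; rewrite scale1r mul1r. Qed.

Lemma ip0l z : ip 0 z = 0.
Proof. by apply: (addrI (ip 0 z)); rewrite -ipDl !addr0. Qed.

Lemma ipZl a x z : ip (a *: x) z = a * ip x z.
Proof. by have := ipDZl a x 0 z; rewrite !addr0 ip0l addr0. Qed.

Lemma ipNl x z : ip (- x) z = - ip x z.
Proof. by rewrite -scaleN1r ipZl mulN1r. Qed.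

Lemma ipBl x y z : ip (x - y) z = ip x z - ip y z.
Proof. by rewrite ipDl ipNl. Qed.

Lemma ipDr x y z : ip z (x + y) = ip z x + ip z y.
Proof. by rewrite ipC ipDl rmorphD /= -!ipC. Qed.

Lemma ipZr a x z : ip z (a *: x) = a^* * ip z x.
Proof. by rewrite ipC ipZl rmorphM /= -ipC. Qed.

Lemma ipNr x z : ip z (- x) = - ip z x.
Proof. by rewrite ipC ipNl rmorphN /= -ipC. Qed.

Lemma ipBr x y z : ip z (x - y) = ip z x - ip z y.
Proof. by rewrite ipDr ipNr. Qed.

Lemma ip0r z : ip z 0 = 0.
Proof. by rewrite ipC ip0l conjc0. Qed.

Lemma Re_ipC x y : Re (ip y x) = Re (ip x y).
Proof. by rewrite ipC ReJ. Qed.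

Lemma Re_ipZl r x y : Re (ip (r%:C *: x) y) = r * Re (ip x y).
Proof. by rewrite ipZl ReM /= mul0r subr0. Qed.

Lemma Re_ipZr r x y : Re (ip x (r%:C *: y)) = r * Re (ip x y).
Proof. by rewrite Re_ipC Re_ipZl Re_ipC. Qed.

Lemma Re_ipDZl a x y z :
  Re (ip (a *: x + y) z) = Re a * Re (ip x z) - Im a * Im (ip x z) + Re (ip y z).
Proof. by rewrite ipDZl ReD ReM. Qed.

Lemma Im_ip x y : Im (ip x y) = Re (ip x ('i *: y)).
Proof. by rewrite ipZr Re_conjiM. Qed.

Lemma sqnorm_ge0 x : 0 <= sqnorm x.
Proof. by case: hH => _ _ /(_ x) []. Qed.

Lemma sqnorm_eq0 x : sqnorm x = 0 -> x = 0.
Proof.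
case: hH => _ _ /(_ x) [_ Im0] eq0 _ Re0; apply: eq0.
exact: complexP.
Qed.

Lemma sqnormD x y : sqnorm (x + y) = sqnorm x + 2 * Re (ip x y) + sqnorm y.
Proof. by rewrite /sqnorm ipDl !ipDr !ReD (Re_ipC x y); lra. Qed.

Lemma sqnormN x : sqnorm (- x) = sqnorm x.
Proof. by rewrite /sqnorm ipNl ipNr opprK. Qed.

Lemma sqnormB x y : sqnorm (x - y) = sqnorm x - 2 * Re (ip x y) + sqnorm y.
Proof. by rewrite sqnormD sqnormN ipNr ReN; lra. Qed.

Lemma sqnormZ r x : sqnorm (r%:C *: x) = r ^+ 2 * sqnorm x.
Proof. by rewrite /sqnorm Re_ipZl Re_ipZr mulrA expr2. Qed.

Lemma hnorm_ge0 x : 0 <= hn x.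
Proof. exact: sqrtr_ge0. Qed.

Lemma hnorm_sqr x : hn x ^+ 2 = sqnorm x.
Proof. by rewrite /hnorm sqr_sqrtr // sqnorm_ge0. Qed.

Lemma hnormN x : hn (- x) = hn x.
Proof. by rewrite /hnorm -/(sqnorm _) sqnormN. Qed.

Lemma hnorm_le1 x : (hn x <= 1) = (sqnorm x <= 1).
Proof. by rewrite -hnorm_sqr -[in RHS](expr1n _ 2) ler_pXn2r ?nnegrE ?hnorm_ge0. Qed.

Lemma hnorm_gt0 x : x != 0 -> 0 < hn x.
Proof.
move=> x_neq0; rewrite lt_neqAle hnorm_ge0 andbT eq_sym; apply: contraNneq x_neq0.
by move=> hx0; apply/eqP/sqnorm_eq0; rewrite -hnorm_sqr hx0 expr0n.
Qed.

Lemma Re_ip_le x y : Re (ip x y) <= hn x * hn y.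
Proof.
have [->|/hnorm_gt0 xp] := eqVneq x 0; first by rewrite ip0l mulr_ge0 ?hnorm_ge0.
have [->|/hnorm_gt0 yp] := eqVneq y 0; first by rewrite ip0r mulr_ge0 ?hnorm_ge0.
have := sqnorm_ge0 ((hn y)%:C *: x - (hn x)%:C *: y).
rewrite sqnormB !sqnormZ Re_ipZl Re_ipZr -!hnorm_sqr.
have := mulr_gt0 xp yp; nra.
Qed.

Lemma normr_Re_ip_le x y : `|Re (ip x y)| <= hn x * hn y.
Proof.
rewrite ler_norml Re_ip_le andbT.
by have := Re_ip_le (- x) y; rewrite ipNl ReN hnormN; lra.
Qed.

Lemma sqnorm_parallelogram x y :
  sqnorm (x - y) + sqnorm (x + y) = 2 * sqnorm x + 2 * sqnorm y.
Proof. by rewrite sqnormB sqnormD; lra. Qed.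

Lemma hnorm_le_sqnorm x : hn x <= (1 + sqnorm x) / 2.
Proof. by have := sqr_ge0 (hn x - 1); rewrite -hnorm_sqr sqrrB; lra. Qed.

Lemma hnormD x y : hn (x + y) <= hn x + hn y.
Proof.
rewrite -(ler_pXn2r (n := 2)) ?nnegrE ?addr_ge0 ?hnorm_ge0 //.
by rewrite hnorm_sqr sqnormD sqrrD -!hnorm_sqr; have := Re_ip_le x y; lra.
Qed.

Lemma Re_ip_inj x y : (forall z, Re (ip x z) = Re (ip y z)) -> x = y.
Proof.
move=> eqxy; apply/eqP; rewrite -subr_eq0; apply/eqP/sqnorm_eq0.
by rewrite /sqnorm ipBl ReD ReN eqxy subrr.
Qed.

Lemma Re_ip_perturb x x' y y' :
  `|Re (ip x y) - Re (ip x' y')| <= hn (x - x') * hn y + hn x' * hn (y - y').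
Proof.
have -> : Re (ip x y) - Re (ip x' y') = Re (ip (x - x') y) + Re (ip x' (y - y')).
  by rewrite ipBl ipBr !ReD !ReN; lra.
by apply: le_trans (ler_normD _ _) _; rewrite lerD ?normr_Re_ip_le.
Qed.
End InnerProduct.

Section RealSequences.
Variable R : realType.
Local Notation Re := complex.Re.
Local Notation Im := complex.Im.
Implicit Types (u v : nat -> R) (l r : R).

Definition cvgR u l := forall e : R, 0 < e ->
  exists N : nat, forall m : nat, (N <= m)%N -> `|u m - l| < e.

Lemma eq_cvgR u v l : u =1 v -> cvgR u l -> cvgR v l.
Proof. by move=> uv ul e /ul [N uN]; exists N => m; rewrite -uv; apply: uN. Qed.

Lemma cvgR_unique u l l' : cvgR u l -> cvgR u l' -> l = l'.
Proof.
move=> ul ul'; apply/eqP; rewrite -subr_eq0 -normr_le0; apply/ler_addgt0Pr => e e_gt0.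
have e2_gt0 : 0 < e / 2 by rewrite divr_gt0.
have [N uN] := ul _ e2_gt0; have [N' uN'] := ul' _ e2_gt0.
have := uN (maxn N N') (leq_maxl _ _); have := uN' (maxn N N') (leq_maxr _ _).
by rewrite add0r !ltr_norml ler_norml; lra.
Qed.

Lemma cvgRD u v l l' : cvgR u l -> cvgR v l' -> cvgR (fun m => u m + v m) (l + l').
Proof.
move=> ul vl' e e_gt0; have e2_gt0 : 0 < e / 2 by rewrite divr_gt0.
have [N uN] := ul _ e2_gt0; have [N' vN'] := vl' _ e2_gt0.
exists (maxn N N') => m; rewrite geq_max => /andP[/uN + /vN'].
by rewrite !ltr_norml; lra.
Qed.

Lemma cvgRZ r u l : cvgR u l -> cvgR (fun m => r * u m) (r * l).
Proof.
move=> ul e e_gt0; have r1_gt0 : 0 < `|r| + 1 by rewrite ltr_wpDl.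
have [N uN] := ul _ (divr_gt0 e_gt0 r1_gt0); exists N => m /uN ulm.
rewrite -mulrBr normrM; apply: le_lt_trans (_ : (`|r| + 1) * `|u m - l| < e).
  by rewrite ler_wpM2r ?lerDl.
by rewrite mulrC -ltr_pdivlMr.
Qed.

Lemma cvgR_le u l c : (forall m, u m <= c) -> cvgR u l -> l <= c.
Proof.
move=> uc ul; apply/ler_addgt0Pr => e /ul [N /(_ N (leqnn N))].
by have := uc N; rewrite ltr_norml; lra.
Qed.

Lemma cauchy_cvgR u :
  (forall e : R, 0 < e -> exists N : nat, forall p q : nat,
     (N <= p)%N -> (N <= q)%N -> `|u p - u q| < e) ->
  exists l, cvgR u l.
Proof.
move=> u_cauchy.
pose S r := exists N : nat, forall p, (N <= p)%N -> r <= u p.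
have [N0 uN0] := u_cauchy 1 ltr01.
have S_sup : has_sup S.
  split.
    exists (u N0 - 1), N0 => p N0p.
    by have := uN0 p N0 N0p (leqnn _); rewrite ltr_norml; lra.
  exists (u N0 + 1) => r [N uN]; have := uN (maxn N N0) (leq_maxl _ _).
  by have := uN0 (maxn N N0) N0 (leq_maxr _ _) (leqnn _); rewrite ltr_norml; lra.
exists (sup S) => e e_gt0.
have [N uN] := u_cauchy _ (divr_gt0 e_gt0 (ltr0Sn _ 1)); exists N => m Nm.
have sup_ge : u m - e / 2 <= sup S.
  apply: sup_upper_bound => //; exists N => p Np.
  by have := uN p m Np Nm; rewrite ltr_norml; lra.
have sup_le : sup S <= u m + e / 2.
  apply: ge_sup; first by case: S_sup.
  move=> r [N' uN']; have := uN' (maxn N N') (leq_maxr _ _).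
  by have := uN (maxn N N') m (leq_maxl _ _) Nm; rewrite ltr_norml; lra.
by rewrite ltr_norml; lra.
Qed.

Lemma ccvg_ReIm (z : nat -> R[i]) (l : R[i]) :
  cvgR (fun m => Re (z m)) (Re l) -> cvgR (fun m => Im (z m)) (Im l) -> ccvg z l.
Proof.
move=> Re_cvg Im_cvg e e_gt0; have e2_gt0 : 0 < e / 2 by rewrite divr_gt0.
have [N1 N1P] := Re_cvg _ e2_gt0; have [N2 N2P] := Im_cvg _ e2_gt0.
exists (maxn N1 N2) => m; rewrite geq_max => /andP[/N1P + /N2P].
by rewrite -ReN -ReD -ImN -ImD; have := normc_le_ReIm (z m - l); lra.
Qed.

Lemma inv_succ_lt r : 0 < r ->
  exists N : nat, forall p : nat, (N <= p)%N -> p.+1%:R^-1 < r.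
Proof.
move=> r_gt0; have rV_ge0 : 0 <= r^-1 by rewrite invr_ge0 ltW.
exists (Num.Def.archi_bound r^-1) => p Np.
rewrite invf_plt ?posrE //; apply: lt_le_trans (archi_boundP rV_ge0) _.
by rewrite ler_nat (leq_trans Np).
Qed.
End RealSequences.

(* Innermost conditionals first, so that no condition containing an [if] is
   ever abstracted. *)
Ltac case_ifs :=
  repeat match goal with
  | |- context[if ?b then _ else _] =>
      lazymatch b with
      | context[if _ then _ else _] => fail
      | _ => case: (boolP b) => ? /=
      end
  end.

Definition block_swap (a d k x : nat) : nat :=
  if (a < x <= a + k)%N then (x + d)%N
  else if (a + d < x <= a + d + k)%N then (x - d)%N
  else x.

Lemma block_swapK a d k : (k <= d)%N -> involutive (block_swap a d k).
Proof. by move=> kd x; rewrite /block_swap; case_ifs; lia. Qed.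

Lemma block_swap_id a d k x : (x <= a)%N -> block_swap a d k x = x.
Proof. by move=> xa; rewrite /block_swap; case_ifs; lia. Qed.

Lemma sigmaE n m : sigma n m =1 block_swap n m m.
Proof. by move=> x; rewrite /sigma /block_swap; case_ifs; lia. Qed.

Lemma sigmaK n m : involutive (sigma n m).
Proof. by move=> x; rewrite !sigmaE block_swapK. Qed.

Lemma is_perm_inf_involutive s : involutive s -> s 0%N = 0%N -> is_perm_inf s.
Proof. by move=> sK s0; split => //; exists s. Qed.

Lemma block_swap_perm a d k : (k <= d)%N -> is_perm_inf (block_swap a d k).
Proof.
move=> kd; apply: is_perm_inf_involutive; first exact: block_swapK.
exact: block_swap_id.
Qed.

Lemma sigma_perm n m : is_perm_inf (sigma n m).
Proof.
by apply: is_perm_inf_involutive; [apply: sigmaK | rewrite sigmaE block_swap_id].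
Qed.

Lemma is_perm_inf_comp s t : is_perm_inf s -> is_perm_inf t -> is_perm_inf (s \o t).
Proof. by move=> [s_bij s0] [t_bij t0]; split; [apply: bij_comp | rewrite /= t0 s0]. Qed.

Lemma fixes_upto_sigma_conj n k m M : (k <= m)%N -> (m + k <= M)%N ->
  fixes_upto (n + k) (sigma n m \o block_swap (n + m) (M - m) k \o sigma n M).
Proof.
by move=> km mkM x /andP[x_gt0 xnk] /=; rewrite !sigmaE /block_swap; case_ifs; lia.
Qed.

Section LinearOperators.
Variables (R : realType) (H : lmodType R[i]) (T : H -> H).
Hypothesis T_lin : lin_op T.

Lemma linD x y : T (x + y) = T x + T y.
Proof. by have := T_lin 1 x y; rewrite !scale1r. Qed.

Lemma lin0 : T 0 = 0.
Proof. by apply: (addrI (T 0)); rewrite -linD !addr0. Qed.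

Lemma linZ a x : T (a *: x) = a *: T x.
Proof. by have := T_lin a x 0; rewrite !addr0 lin0 addr0. Qed.

Lemma linB x y : T (x - y) = T x - T y.
Proof. by rewrite linD -scaleN1r linZ scaleN1r. Qed.
End LinearOperators.

Section Representation.
Variables (R : realType) (H : lmodType R[i]) (ip : H -> H -> R[i]).
Hypothesis hH : is_hilbert ip.
Variable K : (nat -> nat) -> H -> H.
Hypothesis hK : unitary_rep ip K.
Local Notation Re := complex.Re.
Local Notation hn := (hnorm ip).
Implicit Types (s t : nat -> nat) (x y : H).

Lemma rep_unitary s : is_perm_inf s -> unitary ip (K s).
Proof. by case: hK => + _ _; apply. Qed.

Lemma rep_lin s : is_perm_inf s -> lin_op (K s).
Proof. by case/rep_unitary. Qed.

Lemma rep_ip s x y : is_perm_inf s -> ip (K s x) (K s y) = ip x y.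
Proof. by case/rep_unitary. Qed.

Lemma rep_hnorm s x : is_perm_inf s -> hn (K s x) = hn x.
Proof. by move=> s_perm; rewrite /hnorm rep_ip. Qed.

Lemma rep_comp s t x : is_perm_inf s -> is_perm_inf t -> K (s \o t) x = K s (K t x).
Proof. by move=> s_perm t_perm; case: hK => _ _ ->. Qed.

Lemma rep_involutive_sym s x y : is_perm_inf s -> involutive s ->
  ip (K s x) y = ip x (K s y).
Proof.
move=> s_perm sK; have KsK : K s (K s y) = y.
  rewrite -rep_comp // (_ : s \o s = id); first by case: hK.
  by apply: funext.
by rewrite -{1}KsK rep_ip.
Qed.

Lemma rep_sigma_cauchy n xi eta (e : R) : rep_continuous ip K -> 0 < e ->
  exists k : nat, forall m M, (k <= m)%N -> (m + k <= M)%N ->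
    `|Re (ip (K (sigma n M) xi) eta) - Re (ip (K (sigma n m) xi) eta)|
      <= e * (hn xi + hn eta).
Proof.
move=> K_cont e_gt0.
have [k1 k1_near] := K_cont xi e e_gt0; have [k2 k2_near] := K_cont eta e e_gt0.
pose k := maxn k1 k2; have [k1k k2k] := (leq_maxl k1 k2, leq_maxr k1 k2).
exists k => m M km mkM.
set b := block_swap (n + m)%N (M - m)%N k.
set t := sigma n m \o b \o sigma n M.
have bK : involutive b by apply: block_swapK; lia.
have b_perm : is_perm_inf b by apply: block_swap_perm; lia.
have [sm_perm sM_perm] := (sigma_perm n m, sigma_perm n M).
have t_perm : is_perm_inf t by do 2?apply: is_perm_inf_comp.
have sigma_factor : sigma n M = b \o (sigma n m \o t).
  by apply: funext => x /=; rewrite sigmaK bK.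
have t_near : hn (K t xi - xi) <= e.
  apply: k1_near => // x /andP[x_gt0 xk1].
  by apply: (fixes_upto_sigma_conj (n := n) km mkM); rewrite x_gt0; lia.
have b_near : hn (K b eta - eta) <= e.
  apply: k2_near => // x /andP[_ xk]; apply: block_swap_id; lia.
have -> : K (sigma n M) xi = K b (K (sigma n m) (K t xi)).
  by rewrite sigma_factor !rep_comp //; apply: is_perm_inf_comp.
rewrite rep_involutive_sym //; apply: le_trans (Re_ip_perturb hH _ _ _ _) _.
rewrite -linB; last exact: rep_lin.
rewrite !rep_hnorm //.
have := ler_wpM2r (hnorm_ge0 ip eta) t_near.
have := ler_wpM2l (hnorm_ge0 ip xi) b_near; lra.
Qed.
End Representation.

Lemma lin_le_quad_eq0 (R : realFieldType) (d A : R) :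
  0 <= A -> (forall t, t * d <= A * t ^+ 2) -> d = 0.
Proof.
move=> A_ge0 le_quad; set t := d / (A + 1).
have dt : d = t * (A + 1) by rewrite /t divfK // gt_eqF // ltr_wpDl.
have := le_quad t; rewrite dt => le_t.
have t2_le0 : t ^+ 2 <= 0 by nra.
have /eqP t0 : t == 0 by rewrite -sqrf_eq0 eq_le t2_le0 sqr_ge0.
by rewrite t0 mul0r.
Qed.

Section Riesz.
Variables (R : realType) (H : lmodType R[i]) (ip : H -> H -> R[i]).
Hypothesis hH : is_hilbert ip.
Local Notation Re := complex.Re.
Local Notation hn := (hnorm ip).
Local Notation sqnorm := (sqnorm ip).
Variables (g : H -> R) (C : R).
Hypothesis gD : forall x y, g (x + y) = g x + g y.
Hypothesis gZ : forall (r : R) x, g (r%:C *: x) = r * g x.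
Hypothesis g_bounded : forall x, g x <= C * hn x.
Implicit Types (x y : H).

Let g0 : g 0 = 0.
Proof. by apply: (addrI (g 0)); rewrite -gD !addr0. Qed.

Let gB x y : g (x - y) = g x - g y.
Proof.
have gN : g (- y) = - g y by apply: (addrI (g y)); rewrite -gD !subrr g0.
by rewrite gD gN.
Qed.

Let g_lipschitz x y : `|g x - g y| <= `|C| * hn (x - y).
Proof.
have le_absC z : g z <= `|C| * hn z.
  by apply: le_trans (g_bounded z) _; rewrite ler_wpM2r ?hnorm_ge0 ?ler_norm.
have := le_absC (x - y); have := le_absC (y - x).
by rewrite -(hnormN hH) opprB !gB ler_norml => ? ?; apply/andP; split; lra.
Qed.

Let ball_values : set R := [set g x | x in [set x | sqnorm x <= 1]].
Let s := sup ball_values.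

Let ball_values_has_sup : has_sup ball_values.
Proof.
split; first by exists (g 0), 0 => //=; rewrite /sqnorm (ip0l hH) ler01.
exists `|C| => _ [x x_ball <-]; apply: le_trans (g_bounded x) _.
apply: le_trans (ler_norm _) _; rewrite normrM (ger0_norm (hnorm_ge0 ip x)).
by rewrite -[leRHS]mulr1 ler_wpM2l // (hnorm_le1 hH).
Qed.

Let sup_ball_ge0 : 0 <= s.
Proof.
have zero_ball : ball_values (g 0) by exists 0; rewrite //= /sqnorm (ip0l hH) ler01.
by have := sup_upper_bound ball_values_has_sup zero_ball; rewrite g0.
Qed.

Let g_le_sup x : g x <= s * hn x.
Proof.
have [->|/(hnorm_gt0 hH) x_gt0] := eqVneq x 0.
  by rewrite g0 mulr_ge0 ?sup_ball_ge0 ?hnorm_ge0.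
have x_ball : ball_values (g ((hn x)^-1%:C *: x)).
  exists ((hn x)^-1%:C *: x) => //=.
  by rewrite (sqnormZ hH) -(hnorm_sqr hH) exprVn mulVf // expf_neq0 // gt_eqF.
have := sup_upper_bound ball_values_has_sup x_ball; rewrite -/s gZ.
by rewrite ler_pdivrMl // mulrC.
Qed.

Let near_sup_sqnormB a b ea eb : sqnorm a <= 1 -> sqnorm b <= 1 ->
  s - ea < g a -> s - eb < g b -> s * sqnorm (a - b) <= 4 * (ea + eb).
Proof.
move=> a_ball b_ball ga gb.
have := sqnorm_parallelogram hH a b; have := g_le_sup (a + b); rewrite gD.
have := hnorm_sqr hH (a + b); have := hnorm_ge0 ip (a + b); have := sup_ball_ge0.
have := sqnorm_ge0 hH (a - b); set h := hn (a + b) => ? ? ? hh ? ?.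
have h_le2 : h <= 2 by nra.
have : s * sqnorm (a - b) <= s * (4 - h ^+ 2) by rewrite ler_wpM2l ?sup_ball_ge0 //; lra.
nra.
Qed.

Let near_sup_cauchy (xs : nat -> H) : 0 < s ->
  (forall j, sqnorm (xs j) <= 1 /\ s - j.+1%:R^-1 < g (xs j)) ->
  forall e : R, 0 < e -> exists N : nat, forall p q : nat,
    (N <= p)%N -> (N <= q)%N -> hn (xs p - xs q) < e.
Proof.
move=> s_gt0 xsP e e_gt0.
have e2s_gt0 : 0 < s * e ^+ 2 / 8 by rewrite divr_gt0 ?mulr_gt0 ?exprn_gt0.
have [N NP] := inv_succ_lt e2s_gt0.
exists N => p q Np Nq.
have [[p_ball gp] [q_ball gq]] := (xsP p, xsP q).
have := near_sup_sqnormB p_ball q_ball gp gq; have := NP p Np; have := NP q Nq.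
have := hnorm_sqr hH (xs p - xs q); have := hnorm_ge0 ip (xs p - xs q).
set h := hn _ => h_ge0 <- ltq ltp le4.
have : s * h ^+ 2 < s * e ^+ 2.
  move: (p.+1%:R^-1) (q.+1%:R^-1) (s * e ^+ 2) ltq ltp le4 => a b c; lra.
rewrite ltr_pM2l //; nra.
Qed.

Let sup_attained : exists2 x0, sqnorm x0 <= 1 & s <= g x0.
Proof.
have [s_eq0|s_neq0] := eqVneq s 0.
  by exists 0; rewrite ?s_eq0 ?g0 // /sqnorm (ip0l hH) ler01.
have s_gt0 : 0 < s by rewrite lt_neqAle eq_sym s_neq0 sup_ball_ge0.
have near_sup j : exists x, sqnorm x <= 1 /\ s - j.+1%:R^-1 < g x.
  have inv_gt0 : 0 < j.+1%:R^-1 :> R by rewrite invr_gt0.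
  have [_ [x x_ball <-]] := sup_adherent inv_gt0 ball_values_has_sup.
  by exists x.
have [xs xsP] := choice near_sup.
have [_ _ _ _ complete] := hH.
have [x0 x0_lim] := complete xs (near_sup_cauchy s_gt0 xsP).
exists x0.
  rewrite -(hnorm_le1 hH); apply/ler_addgt0Pr => e /x0_lim [N /(_ N (leqnn N))].
  have := hnormD hH (xs N) (x0 - xs N).
  rewrite [xs N + _]addrC subrK -[x0 - xs N]opprB (hnormN hH).
  by have := (xsP N).1; rewrite -(hnorm_le1 hH); lra.
apply/ler_addgt0Pr => e e_gt0.
have C1_gt0 : 0 < `|C| + 1 by rewrite ltr_wpDl.
have [N1 N1P] := inv_succ_lt (divr_gt0 e_gt0 (ltr0Sn R 1)).
have [N2 N2P] := x0_lim _ (divr_gt0 (divr_gt0 e_gt0 (ltr0Sn R 1)) C1_gt0).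
pose p := maxn N1 N2.
have := N1P p (leq_maxl _ _); have := (xsP p).2.
have := N2P p (leq_maxr _ _); rewrite ltr_pdivlMr // => near_x0.
have Ch_lt : `|C| * hn (xs p - x0) < e / 2.
  by apply: le_lt_trans _ near_x0; rewrite mulrC ler_wpM2l ?hnorm_ge0 ?lerDl.
move: (g_lipschitz (xs p) x0) (p.+1%:R^-1) => /[!ler_norml] /andP[_ lip] a.
lra.
Qed.

Let sup_attained_represents x0 : sqnorm x0 <= 1 -> s <= g x0 ->
  forall y, g y = s * Re (ip x0 y).
Proof.
move=> x0_ball x0_max y; apply/eqP; rewrite -subr_eq0; apply/eqP.
(* x0 maximizes g on the unit ball, so perturbing it along y only has a
   second-order effect. *)
apply: (@lin_le_quad_eq0 _ _ (s * sqnorm y / 2)) => [|t].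
  by rewrite divr_ge0 ?mulr_ge0 ?sup_ball_ge0 ?sqnorm_ge0.
have := g_le_sup (x0 + t%:C *: y); rewrite gD gZ => le_sup.
have := hnorm_le_sqnorm hH (x0 + t%:C *: y).
rewrite (sqnormD hH) (sqnormZ hH) (Re_ipZr hH) => /(ler_wpM2l sup_ball_ge0) le_quad.
have := sqnorm_ge0 hH y; have := sup_ball_ge0; nra.
Qed.

Lemma riesz_Re : exists z, forall y, g y = Re (ip z y).
Proof.
have [x0 x0_ball x0_max] := sup_attained.
by exists (s%:C *: x0) => y; rewrite (Re_ipZl hH) (sup_attained_represents x0_ball).
Qed.
End Riesz.

Section WeakLimit.
Variables (R : realType) (H : lmodType R[i]) (ip : H -> H -> R[i]).
Hypothesis hH : is_hilbert ip.
Variable K : (nat -> nat) -> H -> H.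
Hypotheses (hK : unitary_rep ip K) (K_cont : rep_continuous ip K).
Variable n : nat.
Local Notation Re := complex.Re.
Local Notation Im := complex.Im.
Local Notation hn := (hnorm ip).
Implicit Types (x y : H).

Lemma Re_coef_cauchy xi eta : exists l, cvgR (fun m => Re (ip (K (sigma n m) xi) eta)) l.
Proof.
apply: cauchy_cvgR => e e_gt0.
have S_ge0 : 0 <= hn xi + hn eta by rewrite addr_ge0 ?hnorm_ge0.
have e'_gt0 : 0 < e / 2 / (hn xi + hn eta + 1) by rewrite !divr_gt0 ?ltr_wpDl.
have [k kP] := rep_sigma_cauchy hH hK n xi eta K_cont e'_gt0.
exists k => p q kp kq.
have := kP p (p + q + k)%N kp ltac:(lia); have := kP q (p + q + k)%N kq ltac:(lia).
have : e / 2 / (hn xi + hn eta + 1) * (hn xi + hn eta) < e / 2.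
  by rewrite mulrAC ltr_pdivrMr ?ltr_wpDl // ltr_pM2l ?divr_gt0 // ltrDl.
by rewrite !ler_norml ltr_norml; lra.
Qed.

Definition Re_coef_lim xi eta : R :=
  xget 0 (cvgR (fun m => Re (ip (K (sigma n m) xi) eta))).

Lemma Re_coef_limP xi eta :
  cvgR (fun m => Re (ip (K (sigma n m) xi) eta)) (Re_coef_lim xi eta).
Proof. exact: xgetPex (Re_coef_cauchy xi eta). Qed.

Lemma Re_coef_lim_riesz xi : exists z, forall eta, Re_coef_lim xi eta = Re (ip z eta).
Proof.
apply: (riesz_Re hH (C := hn xi)) => [eta eta'|r eta|eta].
- apply: cvgR_unique (Re_coef_limP xi (eta + eta')) _.
  apply: eq_cvgR (cvgRD (Re_coef_limP xi eta) (Re_coef_limP xi eta')) => m.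
  by rewrite (ipDr hH) ReD.
- apply: cvgR_unique (Re_coef_limP xi (r%:C *: eta)) _.
  by apply: eq_cvgR (cvgRZ r (Re_coef_limP xi eta)) => m; rewrite (Re_ipZr hH).
- apply: cvgR_le (Re_coef_limP xi eta) => m; apply: le_trans (Re_ip_le hH _ _) _.
  by rewrite (rep_hnorm hK _ (sigma_perm n m)).
Qed.

Definition weak_lim xi : H :=
  xget 0 (fun z => forall eta, Re_coef_lim xi eta = Re (ip z eta)).

Lemma weak_lim_Re xi eta :
  cvgR (fun m => Re (ip (K (sigma n m) xi) eta)) (Re (ip (weak_lim xi) eta)).
Proof. by rewrite -(xgetPex 0 (Re_coef_lim_riesz xi)); apply: Re_coef_limP. Qed.

Lemma weak_lim_Im xi eta :
  cvgR (fun m => Im (ip (K (sigma n m) xi) eta)) (Im (ip (weak_lim xi) eta)).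
Proof.
by rewrite (Im_ip hH); apply: eq_cvgR (weak_lim_Re _ _) => m; rewrite (Im_ip hH).
Qed.

Lemma weak_lim_lin : lin_op weak_lim.
Proof.
move=> a x y; apply: (Re_ip_inj hH) => z.
apply: cvgR_unique (weak_lim_Re (a *: x + y) z) _.
rewrite (Re_ipDZl hH) -mulNr.
apply: eq_cvgR (cvgRD (cvgRD (cvgRZ (Re a) (weak_lim_Re x z))
                             (cvgRZ (- Im a) (weak_lim_Im x z))) (weak_lim_Re y z)) => m.
by rewrite (rep_lin hK (sigma_perm n m)) (Re_ipDZl hH) mulNr.
Qed.

Lemma weak_lim_bounded : bounded_op ip weak_lim.
Proof.
exists 1 => x; rewrite mul1r.
have : sqnorm ip (weak_lim x) <= hn x * hn (weak_lim x).
  apply: cvgR_le (weak_lim_Re x (weak_lim x)) => m.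
  by apply: le_trans (Re_ip_le hH _ _) _; rewrite (rep_hnorm hK _ (sigma_perm n m)).
rewrite -(hnorm_sqr hH); have := hnorm_ge0 ip x; have := hnorm_ge0 ip (weak_lim x); nra.
Qed.

Lemma weak_lim_Re_sym x y : Re (ip (weak_lim x) y) = Re (ip x (weak_lim y)).
Proof.
rewrite (Re_ipC hH (weak_lim y)); apply: cvgR_unique (weak_lim_Re x y) _.
apply: eq_cvgR (weak_lim_Re y x) => m.
by rewrite (rep_involutive_sym hK _ _ (sigma_perm n m) (@sigmaK n m)) (Re_ipC hH).
Qed.

Lemma weak_lim_sym x y : ip (weak_lim x) y = ip x (weak_lim y).
Proof.
apply: complexP; first exact: weak_lim_Re_sym.
by rewrite !(Im_ip hH) weak_lim_Re_sym (linZ weak_lim_lin).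
Qed.
End WeakLimit.

Theorem lemma1 (R : realType) (H : lmodType R[i]) (ip : H -> H -> R[i])
  (K : (nat -> nat) -> H -> H) (n : nat) :
  is_hilbert ip -> unitary_rep ip K -> rep_continuous ip K ->
  exists P : H -> H, self_adjoint ip P /\
    wot_cvg ip (fun m => K (sigma n m)) P.
Proof.
move=> hH hK K_cont; exists (weak_lim ip K n); split.
  split; first exact: weak_lim_lin.
  by split; [exact: weak_lim_bounded | exact: weak_lim_sym].
by move=> xi eta; apply: ccvg_ReIm; [exact: weak_lim_Re | exact: weak_lim_Im].
Qed.
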